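(* Let $\bar G=(\bar V,\bar E)$ be a connected undirected graph whose node set is totally ordered by $<$. Define the directed graph $G_{VC}=(V_{VC},E_{VC})$ by $V_{VC}=\bar V\sqcup\{\hat r\}$ and $E_{VC}=\{(i,j):\{i,j\}\in\bar E,\ i<j\}\cup\{(\hat r,i):i\in\bar V\}$. Then the minimum extraction width of an extraction order of $G_{VC}$ rooted at $\hat r$ equals the size of a minimum vertex cover of $\bar G$ plus one.
   Context: An extraction order of a directed graph $G=(V,E)$ is a rooted directed acyclic graph $G^{\mathcal X}=(V,E^{\mathcal X},s)$ in which every node is reachable from the root $s$ and $E^{\mathcal X}$ is obtained from $E$ by reversing some (possibly no) edges. A confluence from $a$ to $b$ is a pair of directed paths in $E^{\mathcal X}$ from $a$ to $b$ sharing no node other than $a,b$. For $e\in E^{\mathcal X}$, its label set $\mathcal L_e$ is the set of nodes $b$ such that $e$ lies on some confluence with target $b$. Each node's outgoing edges are partitioned into bags: classes of the equivalence relation generated by $e\sim e'$ iff $\mathcal L_e\cap\mathcal L_{e'}\ne\emptyset$; bag label set $\mathcal L_B=\bigcup_{e\in B}\mathcal L_e$. The extraction width is $1+\max|\mathcal L_B|$ over all bags of all nodes. *)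

From mathcomp Require Import all_boot all_order.
From mathcomp Require Import boolp.
Set Implicit Arguments. Unset Strict Implicit. Unset Printing Implicit Defensive.
Import Order.TTheory.

Section XOrd.
Variable T : finType.

Definition xorder (E X : rel T) (s : T) : Prop :=
  [/\ (forall u v, E u v -> (X u v && ~~ X v u) || (X v u && ~~ X u v)),
      (forall u v, X u v -> E u v || E v u),
      (forall u v, X u v -> ~~ connect X v u)
    & (forall v, connect X s v)].

(* A directed path in X from a to b, given as the list p of nodes after a. *)
Definition dpath (X : rel T) (a b : T) (p : seq T) : bool :=
  path X a p && (last a p == b).

Definition confluence (X : rel T) (a b : T) (p1 p2 : seq T) : Prop :=
  [/\ dpath X a b p1, dpath X a b p2, p1 != p2
    & forall x, x \in a :: p1 -> x \in a :: p2 -> (x == a) || (x == b)].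

Definition edge_on (a : T) (p : seq T) (u v : T) : bool :=
  (u, v) \in zip (a :: p) p.

Definition label (X : rel T) (u v : T) : {set T} :=
  [set b | `[< exists a p1 p2, confluence X a b p1 p2 /\
                 (edge_on a p1 u v || edge_on a p2 u v) >] ].

Definition bag_rel (X : rel T) (u : T) : rel T :=
  fun v w => [&& X u v, X u w & [exists b, (b \in label X u v) && (b \in label X u w)]].

(* Label set of the bag of node u containing the outgoing edge (u,v): the
   union of the label sets of the edges in its class for the equivalence
   generated by bag_rel. *)
Definition bag_label (X : rel T) (u v : T) : {set T} :=
  \bigcup_(w | X u w && connect (bag_rel X u) v w) label X u w.

Definition xwidth (X : rel T) : nat :=
  (\max_(u : T) \max_(v | X u v) #|bag_label X u v|).+1.

End XOrd.

Section VC.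
Variable V : finType.

Definition vertex_cover (E : rel V) (C : {set V}) : Prop :=
  forall x y, E x y -> (x \in C) || (y \in C).

End VC.

(* The directed graph G_VC on option V: None is the extra root r^,
   Some i are the original nodes. *)
Definition G_VC (d : Order.disp_t) (V : finOrderType d) (E : rel V)
  : rel (option V) :=
  fun x y => match x, y with
             | Some i, Some j => E i j && (i < j)%O
             | None, Some _ => true
             | _, None => false
             end.

From mathcomp Require Import all_boot all_order.
From mathcomp Require Import boolp.
Set Implicit Arguments. Unset Strict Implicit. Unset Printing Implicit Defensive.
Import Order.TTheory.

(* In an extraction order of G_VC the root r points to every node, and each
   edge i -> j of the undirected graph closes a triangle r -> i -> j, r -> j
   whose two sides form a confluence to j.  So j labels both root edges ri and
   rj; by connectivity all root edges fall into a single bag, whose label set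
   contains the heads of all oriented edges, and these heads form a vertex
   cover.  Conversely, orient every edge towards a minimum cover C (and inside
   C along any numbering).  In an acyclic order the target of a confluence has
   two distinct in-neighbours, and here only the nodes of C do, so every label
   set lies inside C. *)

Section Confluences.
Variables (T : finType) (X : rel T).

Definition acyclic : Prop := forall u v, X u v -> ~~ connect X v u.

Definition merge_nodes : {set T} :=
  [set b | [exists x1, exists x2, [&& x1 != x2, X x1 b & X x2 b]]].

Lemma potential_acyclic (f : T -> nat) :
  (forall u v, X u v -> f u < f v) -> acyclic.
Proof.
move=> Xf u v /Xf ltuv; apply/negP => /connectP[p vp uE].
suff : f v <= f u by rewrite leqNgt ltuv.
rewrite {}uE {ltuv}; elim: p v vp => //= w p IH v /andP[/Xf ltvw /IH].
exact/leq_trans/ltnW.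
Qed.

Lemma triangle_confluence a u b :
  X a u -> X u b -> X a b -> confluence X a b [:: b] [:: u; b].
Proof.
move=> Xau Xub Xab; split; rewrite /dpath /= ?Xau ?Xub ?Xab ?eqxx //.
  by apply/eqP => /(congr1 size).
by move=> x; rewrite !inE => /orP[->|->]; rewrite ?orbT.
Qed.

Lemma mem_label_triangle a u b : X a u -> X u b -> X a b ->
  (b \in label X a u) && (b \in label X a b).
Proof.
move=> Xau Xub Xab; rewrite /label !inE; apply/andP; split; apply/asboolP;
  exists a, [:: b], [:: u; b]; split; try exact: triangle_confluence;
  by rewrite /edge_on /= !inE eqxx ?orbT.
Qed.

Lemma bag_relC u : symmetric (bag_rel X u).
Proof.
move=> v w; rewrite /bag_rel andbCA; congr [&& _, _ & _].
by apply: eq_existsb => b; rewrite andbC.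
Qed.

Lemma bag_rel_triangle a u b : X a u -> X u b -> X a b -> bag_rel X a u b.
Proof.
move=> Xau Xub Xab; rewrite /bag_rel Xau Xab; apply/existsP; exists b.
exact: mem_label_triangle.
Qed.

Lemma bag_label_lt_xwidth u v : X u v -> #|bag_label X u v| < xwidth X.
Proof.
by move=> Xuv; rewrite ltnS; apply: leq_trans (leq_bigmax_cond _ Xuv) (leq_bigmax u).
Qed.

Hypothesis Xacyc : acyclic.

Lemma acyclic_path_nil a p : path X a p -> last a p = a -> p = [::].
Proof.
case: p => // y p /= /andP[Xay yp] ya.
by have := Xacyc Xay; rewrite -ya (path_connect yp (mem_last y p)).
Qed.

Lemma confluence_merge_node a b p1 p2 :
  confluence X a b p1 p2 -> b \in merge_nodes.
Proof.
case=> /andP[P1 /eqP L1] /andP[P2 /eqP L2] p12 disj.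
have nil_both p q : path X a p -> last a p = b ->
    path X a q -> last a q = b -> p = [::] -> q = [::].
  by move=> _ <- Pq Lq pnil; move: Lq; rewrite pnil; exact: acyclic_path_nil.
case/lastP: p1 P1 L1 p12 disj => [|q1 c1] P1 L1 p12 disj.
  by rewrite (nil_both _ _ P1 L1 P2 L2 erefl) eqxx in p12.
case/lastP: p2 P2 L2 p12 disj => [|q2 c2] P2 L2 p12 disj.
  by rewrite (nil_both _ _ P2 L2 P1 L1 erefl) eqxx in p12.
rewrite !last_rcons in L1 L2; subst c1 c2.
rewrite !rcons_path in P1 P2; case/andP: P1 => Q1 X1; case/andP: P2 => Q2 X2.
rewrite inE; apply/existsP; exists (last a q1); apply/existsP; exists (last a q2).
rewrite X1 X2 !andbT; apply: contra p12 => /eqP x12.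
(* A common predecessor of [b] is an inner node of both paths, hence it is [a]
   (and then p1 = p2 = [:: b]) or [b] itself (a loop). *)
have mem_pred q : last a q \in a :: rcons q b.
  by rewrite -cats1 -cat_cons mem_cat mem_last.
have x_p2 : last a q1 \in a :: rcons q2 b by rewrite x12 mem_pred.
case/orP: (disj _ (mem_pred q1) x_p2) => /eqP xa.
  by rewrite (acyclic_path_nil Q1 xa) (acyclic_path_nil Q2 (etrans (esym x12) xa)).
by have := Xacyc X1; rewrite xa connect0.
Qed.

Lemma label_sub_merge_nodes u v : label X u v \subset merge_nodes.
Proof.
apply/subsetP => b; rewrite inE => /asboolP[a [p1 [p2 [conf _]]]].
exact: confluence_merge_node conf.
Qed.

Lemma xwidth_le_merge_nodes : xwidth X <= #|merge_nodes|.+1.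
Proof.
rewrite ltnS; apply/bigmax_leqP => u _; apply/bigmax_leqP => v _.
by apply/subset_leq_card/bigcupsP => w _; exact: label_sub_merge_nodes.
Qed.

End Confluences.

Section ExtractionOrders.
Variables (T : finType) (E X : rel T) (s : T).
Hypothesis Xord : xorder E X s.

Lemma xorder_acyclic : acyclic X.
Proof. by case: Xord. Qed.

Lemma xorder_orient u v : E u v -> X u v || X v u.
Proof. by case: Xord => orient _ _ _ /orient /orP[] /andP[-> _]; rewrite ?orbT. Qed.

Lemma xorder_root_edge v : E s v -> X s v.
Proof.
move=> Esv; case/orP: (xorder_orient Esv) => // Xvs.
by have := xorder_acyclic Xvs; case: Xord => _ _ _ ->.
Qed.

End ExtractionOrders.

Section VertexCoverGraph.
Variables (d : Order.disp_t) (V : finOrderType d) (E : rel V).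
Hypotheses (Esym : symmetric E) (Eirr : irreflexive E).

Local Notation G := (G_VC E).

Lemma G_VC_orient i j : E i j -> G (Some i) (Some j) || G (Some j) (Some i).
Proof.
move=> Eij; rewrite /G_VC [E j i]Esym Eij /=.
by apply: lt_total; apply: contraTneq Eij => ->; rewrite Eirr.
Qed.

Section RootBag.
Variables (X : rel (option V)) (Xord : xorder G X None).

Definition heads : {set V} := [set j | [exists i, X (Some i) (Some j)]].

Lemma xorder_G_VC_root i : X None (Some i).
Proof. exact: (xorder_root_edge Xord (v := Some i)). Qed.

Lemma xorder_G_VC_orient i j : E i j ->
  X (Some i) (Some j) || X (Some j) (Some i).
Proof.
by move/G_VC_orient/orP=> [] /(xorder_orient Xord); rewrite // orbC.
Qed.

Lemma heads_cover : vertex_cover E heads.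
Proof.
move=> i j /xorder_G_VC_orient /orP[] Xe; rewrite !inE;
  apply/orP; [right | left]; apply/existsP; eexists; exact: Xe.
Qed.

Lemma root_bag_rel i j : E i j -> bag_rel X None (Some i) (Some j).
Proof.
move/xorder_G_VC_orient/orP=> [] Xe; last rewrite bag_relC;
  exact: bag_rel_triangle (xorder_G_VC_root _) Xe (xorder_G_VC_root _).
Qed.

Hypothesis Econn : forall x y : V, connect E x y.

Lemma root_bag_connect i j : connect (bag_rel X None) (Some i) (Some j).
Proof.
case/connectP: (Econn i j) => p + ->; elim: p i => //= k p IH i /andP[Eik pk].
exact: connect_trans (connect1 (root_bag_rel Eik)) (IH _ pk).
Qed.

Lemma heads_lt_xwidth : #|heads| < xwidth X.
Proof.
have [-> | [j _]] := set_0Vmem heads; first by rewrite cards0.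
rewrite -(card_imset _ (@Some_inj _)).
apply: leq_ltn_trans (bag_label_lt_xwidth (xorder_G_VC_root j)).
apply/subset_leq_card/subsetP => _ /imsetP[b + ->]; rewrite inE => /existsP[i Xib].
apply/bigcupP; exists (Some b); first by rewrite xorder_G_VC_root root_bag_connect.
by case/andP: (mem_label_triangle (xorder_G_VC_root i) Xib (xorder_G_VC_root b)).
Qed.

End RootBag.

Section CoverOrientation.
Variables (C : {set V}) (Ccov : vertex_cover E C).

Definition cover_rank (x : option V) : nat :=
  if x is Some i then (if i \in C then (enum_rank i).+2 else 1) else 0.

Definition cover_xorder : rel (option V) :=
  fun x y => (G x y || G y x) && (cover_rank x < cover_rank y).

Lemma cover_rank_eq0 x : (cover_rank x == 0) = (x == None).
Proof. by case: x => [i|] //=; case: ifP. Qed.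

Lemma cover_rank_neq x y : G x y -> cover_rank x != cover_rank y.
Proof.
case: x y => [i|] [j|] //=; last by case: ifP.
case/andP=> Eij _; have := Ccov Eij; case: (i \in C); case: (j \in C) => //= _.
by rewrite !eqSS; apply: contraTneq Eij => /val_inj/enum_rank_inj ->; rewrite Eirr.
Qed.

Lemma cover_xorder_xorder : xorder G cover_xorder None.
Proof.
split.
- move=> x y Gxy; rewrite /cover_xorder Gxy orbT /=.
  by case: ltngtP (cover_rank_neq Gxy); rewrite ?eqxx.
- by move=> x y /andP[].
- by apply: (@potential_acyclic _ _ cover_rank) => x y /andP[].
- by case=> [i|]; [apply: connect1; rewrite /cover_xorder /=; case: ifP | exact: connect0].
Qed.

Lemma merge_nodes_cover_xorder : merge_nodes cover_xorder \subset Some @: C.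
Proof.
apply/subsetP => b; rewrite inE.
case/existsP=> x1 /existsP[x2 /and3P[x12 /andP[_ r1] /andP[_ r2]]].
case: b r1 r2 => [j|] //=; case jC: (j \in C) => r1 r2; first exact: imset_f.
move: r1 r2; rewrite !ltnS !leqn0 !cover_rank_eq0 => /eqP x1N /eqP x2N.
by rewrite x1N x2N eqxx in x12.
Qed.

Lemma xwidth_cover_xorder : xwidth cover_xorder <= #|C|.+1.
Proof.
apply: leq_trans (xwidth_le_merge_nodes (xorder_acyclic cover_xorder_xorder)) _.
by rewrite ltnS -(card_imset C (@Some_inj _)) subset_leq_card // merge_nodes_cover_xorder.
Qed.

End CoverOrientation.

End VertexCoverGraph.

Theorem lemma38 (d : Order.disp_t) (V : finOrderType d) (E : rel V)
  (Esym : symmetric E) (Eirr : irreflexive E)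
  (Econn : forall x y : V, connect E x y)
  (C : {set V}) (Ccov : vertex_cover E C)
  (Cmin : forall C' : {set V}, vertex_cover E C' -> #|C| <= #|C'|) :
  (exists X : rel (option V),
      xorder (G_VC E) X None /\ xwidth X = #|C|.+1) /\
  (forall X : rel (option V),
      xorder (G_VC E) X None -> #|C|.+1 <= xwidth X).
Proof.
have lower X : xorder (G_VC E) X None -> #|C|.+1 <= xwidth X.
  move=> Xord; apply: leq_ltn_trans (Cmin _ (heads_cover Esym Eirr Xord)) _.
  exact: (heads_lt_xwidth Esym Eirr Xord Econn).
split=> //; exists (cover_xorder E C).
have Xord := cover_xorder_xorder Eirr Ccov.
by split=> //; apply/eqP; rewrite eqn_leq xwidth_cover_xorder // lower.
Qed.
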